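(* Fix $a>0$, $b>0$, $c>0$, $\theta>0$ with $\zeta:=\frac{b^2-a(c-\theta)}{a^2}<0$. Let $\kappa=b/a$, $s=\sqrt{-\zeta}$, $z=\frac{c-\theta}{b}$, $p=\frac{b^2}{a(c-\theta)}$, $\bar x=\max\{0,\kappa-\frac{\theta}{2as}\}$, and $$\bar a_M=\frac{\Bigl(b+c^2-3c\theta+2\theta^2+\sqrt{b(b-2c\theta+2\theta^2)}\Bigr)b^2}{(c-\theta)^3}.$$ (Symmetric branch) If $a\le\frac{2b^2}{c-\theta}$, $P(0,\kappa-s)\ge0$ and $P(\bar x,\kappa+s)\ge0$, then the profile in which both players assign probability $\tfrac12$ to each of $\kappa-s$, $\kappa+s$ is an on-domain mixed equilibrium of the truncated contest. (Endpoint branch) If $\frac{2b^2}{c-\theta}\le a\le\bar a_M$, then the profile in which both players assign probability $1-p$ to $0$ and $p$ to $z$ is an on-domain mixed equilibrium of the truncated contest. Wherever the relevant branch condition holds, the equilibrium has $E[x]=E[y]=\kappa$, $\operatorname{Var}(x)=\operatorname{Var}(y)=-\zeta$, and common payoff $\tfrac12-\theta\kappa$.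
   Context: $P(x,y)=\tfrac12+(x-y)\bigl(c-b(x+y)+axy\bigr)$, $\bar P=\min\{1,\max\{0,P\}\}$. The truncated contest is the two-player complete-information game with efforts $x,y\ge0$ and payoffs $\bar P(x,y)-\theta x$ for $X$ and $1-\bar P(x,y)-\theta y$ for $Y$. An equilibrium is on-domain if $0\le P(x,y)\le1$ (so $\bar P=P$) for all pairs $(x,y)$ in the product of the supports of the equilibrium strategies. The condition $a\le\bar a_M$ is understood to require $\bar a_M$ to be a real number. *)

From Stdlib Require Import Reals Lra List.
Import ListNotations.
Open Scope R_scope.

Definition Pw (a b c x y : R) : R :=
  1/2 + (x - y) * (c - b * (x + y) + a * x * y).

Definition Pbar (a b c x y : R) : R := Rmin 1 (Rmax 0 (Pw a b c x y)).

Definition payX (a b c th x y : R) : R := Pbar a b c x y - th * x.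
Definition payY (a b c th x y : R) : R := 1 - Pbar a b c x y - th * y.

(* A finitely supported mixed strategy: list of (probability, effort). *)
Definition mixed := list (R * R).

Definition valid_mixed (s : mixed) : Prop :=
  Forall (fun wx => 0 <= fst wx /\ 0 <= snd wx) s /\
  fold_right (fun wx acc => fst wx + acc) 0 s = 1.

Definition Ex (s : mixed) (f : R -> R) : R :=
  fold_right (fun wx acc => fst wx * f (snd wx) + acc) 0 s.

Definition in_support (s : mixed) (x : R) : Prop :=
  exists w, In (w, x) s /\ 0 < w.

Definition EpayX a b c th (sx sy : mixed) : R :=
  Ex sx (fun x => Ex sy (fun y => payX a b c th x y)).
Definition EpayY a b c th (sx sy : mixed) : R :=
  Ex sx (fun x => Ex sy (fun y => payY a b c th x y)).

Definition is_equilibrium a b c th (sx sy : mixed) : Prop :=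
  valid_mixed sx /\ valid_mixed sy /\
  (forall sx', valid_mixed sx' -> EpayX a b c th sx' sy <= EpayX a b c th sx sy) /\
  (forall sy', valid_mixed sy' -> EpayY a b c th sx sy' <= EpayY a b c th sx sy).

Definition on_domain a b c (sx sy : mixed) : Prop :=
  forall x y, in_support sx x -> in_support sy y ->
    0 <= Pw a b c x y <= 1.

Definition mean (s : mixed) : R := Ex s (fun x => x).
Definition variance (s : mixed) : R := Ex s (fun x => (x - mean s) ^ 2).

Definition good_profile a b c th (s : mixed) : Prop :=
  is_equilibrium a b c th s s /\ on_domain a b c s s /\
  mean s = b / a /\
  variance s = - ((b ^ 2 - a * (c - th)) / a ^ 2) /\
  EpayX a b c th s s = 1/2 - th * (b / a) /\
  EpayY a b c th s s = 1/2 - th * (b / a).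

(* Against any strategy with mean b/a and second moment (c - th)/a, the
   expected untruncated payoff of an effort x is the constant 1/2 - th b/a:
   the x^2 and x terms cancel. A two-point strategy with these moments is
   therefore a symmetric equilibrium once P stays in [0,1] on the support and
   truncation cannot help a deviation. That holds if P(x, high point) >= 0 for
   all x >= 0 (a convex quadratic in x, minimal at its vertex clamped to 0,
   which is xbar in the symmetric branch and is exactly what the threshold aM
   controls in the endpoint branch) and P(x, low point) >= 0 on [0, b/a] (a
   concave quadratic, checked at the endpoints); beyond b/a, a sure loss
   against the low point costs more effort than it can win. *)

From Stdlib Require Import Reals Lra Psatz List.
Import ListNotations.
Open Scope R_scope.

Definition mass (s : mixed) : R := fold_right (fun wx acc => fst wx + acc) 0 s.

Lemma Ex_ext s f g : (forall x, f x = g x) -> Ex s f = Ex s g.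
Proof.
  intros hfg; induction s as [|[w x] s IH]; simpl; [reflexivity|].
  rewrite hfg, IH; reflexivity.
Qed.

Lemma Ex_add s f g : Ex s (fun y => f y + g y) = Ex s f + Ex s g.
Proof. induction s as [|[w x] s IH]; simpl; [ring|]. rewrite IH; ring. Qed.

Lemma Ex_scal s w f : Ex s (fun y => w * f y) = w * Ex s f.
Proof. induction s as [|[w' x] s IH]; simpl; [ring|]. rewrite IH; ring. Qed.

Lemma Ex_const s k : Ex s (fun _ => k) = k * mass s.
Proof. unfold mass; induction s as [|[w x] s IH]; simpl; [ring|]. rewrite IH; ring. Qed.

Lemma Ex_swap s1 s2 F :
  Ex s1 (fun x => Ex s2 (fun y => F x y)) = Ex s2 (fun y => Ex s1 (fun x => F x y)).
Proof.
  induction s1 as [|[w x] s1 IH]; simpl.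
  - rewrite Ex_const; ring.
  - rewrite IH, Ex_add, Ex_scal; reflexivity.
Qed.

Lemma Ex_pair w1 x1 w2 x2 f : Ex [(w1, x1); (w2, x2)] f = w1 * f x1 + w2 * f x2.
Proof. simpl; ring. Qed.

Lemma Ex_le_const s f V :
  valid_mixed s -> (forall x, 0 <= x -> f x <= V) -> Ex s f <= V.
Proof.
  intros [hF hm] hf.
  rewrite <- (Rmult_1_r V), <- hm; clear hm.
  induction hF as [|[w x] s [hw hx] hF IH]; simpl in *; [lra|].
  specialize (hf x hx); nra.
Qed.

Lemma Ex_ext_support s f g :
  valid_mixed s -> (forall x, in_support s x -> f x = g x) -> Ex s f = Ex s g.
Proof.
  intros [hF _]; induction hF as [|[w x] s [hw _] hF IH]; intros hfg; simpl; [reflexivity|].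
  rewrite IH.
  - simpl in hw; destruct hw as [hw | <-]; [|ring].
    rewrite hfg; [reflexivity|]. exists w; split; [left|]; auto.
  - intros y [w' [hin hw']]. apply hfg. exists w'; split; [right|]; auto.
Qed.

Lemma in_support_pair w1 x1 w2 x2 x :
  in_support [(w1, x1); (w2, x2)] x -> x = x1 \/ x = x2.
Proof.
  intros [w [[hin | [hin | []]] _]]; injection hin; intros; subst; auto.
Qed.

Lemma variance_moments s : mass s = 1 -> variance s = Ex s (fun x => x ^ 2) - mean s ^ 2.
Proof.
  intros hm; unfold variance.
  rewrite (Ex_ext s _ (fun x => x ^ 2 + (- 2 * mean s * x + mean s ^ 2))) by (intros; ring).
  rewrite Ex_add, Ex_add, Ex_scal, Ex_const, hm. unfold mean; ring.
Qed.

Section Contest.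

Variables a b c th : R.

Lemma Pw_swap x y : Pw a b c y x = 1 - Pw a b c x y.
Proof. unfold Pw; field. Qed.

Lemma Pw_diag x : Pw a b c x x = 1 / 2.
Proof. unfold Pw; ring. Qed.

Lemma Pbar_swap x y : Pbar a b c y x = 1 - Pbar a b c x y.
Proof.
  unfold Pbar; rewrite Pw_swap.
  unfold Rmin, Rmax; repeat destruct Rle_dec; lra.
Qed.

Lemma Pbar_id x y : 0 <= Pw a b c x y <= 1 -> Pbar a b c x y = Pw a b c x y.
Proof. unfold Pbar, Rmin, Rmax; repeat destruct Rle_dec; lra. Qed.

Lemma Pbar_le_Pw x y : 0 <= Pw a b c x y -> Pbar a b c x y <= Pw a b c x y.
Proof. unfold Pbar, Rmin, Rmax; repeat destruct Rle_dec; lra. Qed.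

Lemma Pbar_le_1 x y : Pbar a b c x y <= 1.
Proof. unfold Pbar, Rmin, Rmax; repeat destruct Rle_dec; lra. Qed.

Lemma Pbar_eq0 x y : Pw a b c x y <= 0 -> Pbar a b c x y = 0.
Proof. unfold Pbar, Rmin, Rmax; repeat destruct Rle_dec; lra. Qed.

Lemma EpayY_swap sx sy : EpayY a b c th sx sy = EpayX a b c th sy sx.
Proof.
  unfold EpayY, EpayX; rewrite Ex_swap.
  apply Ex_ext; intros y; apply Ex_ext; intros x.
  unfold payY, payX; rewrite (Pbar_swap x y); ring.
Qed.

(* The contest is constant-sum and symmetric, so it suffices to bound X's
   pure deviations against [s]. *)
Lemma symmetric_equilibrium s V :
  valid_mixed s ->
  (forall x, 0 <= x -> Ex s (fun y => payX a b c th x y) <= V) ->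
  EpayX a b c th s s = V ->
  is_equilibrium a b c th s s /\ EpayY a b c th s s = V.
Proof.
  intros hs hdev hV.
  assert (hbest : forall s', valid_mixed s' -> EpayX a b c th s' s <= EpayX a b c th s s).
  { intros s' hs'; rewrite hV; exact (Ex_le_const s' _ V hs' hdev). }
  split; [|rewrite EpayY_swap; exact hV].
  split; [exact hs|split; [exact hs|split; [exact hbest|]]].
  intros s' hs'; rewrite !EpayY_swap; exact (hbest s' hs').
Qed.

Lemma Ex_Pw_indifferent s x :
  a <> 0 -> mass s = 1 -> mean s = b / a -> Ex s (fun y => y ^ 2) = (c - th) / a ->
  Ex s (fun y => Pw a b c x y - th * x) = 1 / 2 - th * (b / a).
Proof.
  intros ha hm hmean hsq.
  rewrite (Ex_ext s _ (fun y => (1 / 2 + c * x - b * x ^ 2 - th * x)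
                               + ((a * x ^ 2 - c) * y + (b - a * x) * y ^ 2)))
    by (intros; unfold Pw; ring).
  rewrite Ex_add, Ex_add, Ex_const, Ex_scal, Ex_scal, hm, hsq.
  unfold mean in hmean; rewrite hmean.
  field; exact ha.
Qed.

Lemma good_profile_of_moments s :
  0 < a -> valid_mixed s ->
  mean s = b / a -> Ex s (fun y => y ^ 2) = (c - th) / a ->
  on_domain a b c s s ->
  (forall x, 0 <= x -> Ex s (fun y => payX a b c th x y) <= 1 / 2 - th * (b / a)) ->
  good_profile a b c th s.
Proof.
  intros ha hs hmean hsq hdom hdev.
  assert (hm : mass s = 1) by apply hs.
  assert (hpay : EpayX a b c th s s = 1 / 2 - th * (b / a)).
  { unfold EpayX.
    rewrite (Ex_ext_support s _ (fun _ => 1 / 2 - th * (b / a)) hs), Ex_const, hm; [ring|].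
    intros x hx.
    rewrite <- (Ex_Pw_indifferent s x) by (auto; lra).
    apply (Ex_ext_support s _ _ hs); intros y hy.
    unfold payX; rewrite Pbar_id by (apply hdom; assumption); reflexivity. }
  destruct (symmetric_equilibrium s _ hs hdev hpay) as [heq hpayY].
  refine (conj heq (conj hdom (conj hmean (conj _ (conj hpay hpayY))))).
  rewrite variance_moments, hmean, hsq by exact hm.
  field; lra.
Qed.

Definition Pw_vertex (y : R) : R := y / 2 - (c - b * y) / (2 * (a * y - b)).

Lemma Pw_sub_vertex y x :
  b < a * y ->
  Pw a b c x y - Pw a b c (Pw_vertex y) y = (a * y - b) * (x - Pw_vertex y) ^ 2.
Proof. intros hy; unfold Pw, Pw_vertex; field; lra. Qed.

Lemma Pw_at_vertex y :
  b < a * y ->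
  4 * (a * y - b) * Pw a b c (Pw_vertex y) y
  = 2 * (a * y - b) - (c - 2 * b * y + a * y ^ 2) ^ 2.
Proof. intros hy; unfold Pw, Pw_vertex; field; lra. Qed.

Lemma Pw_min_nonneg y x :
  b < a * y -> 0 <= x -> Pw a b c (Rmax 0 (Pw_vertex y)) y <= Pw a b c x y.
Proof.
  intros hy hx.
  assert (hsub := Pw_sub_vertex y).
  unfold Rmax; destruct Rle_dec as [hm | hm].
  - specialize (hsub x hy).
    assert (0 <= (a * y - b) * (x - Pw_vertex y) ^ 2)
      by (apply Rmult_le_pos; [lra | apply pow2_ge_0]).
    lra.
  - assert (hx0 := hsub x hy); assert (h00 := hsub 0 hy).
    assert (0 <= (a * y - b) * (x * (x - 2 * Pw_vertex y)))
      by (apply Rmult_le_pos; [lra | apply Rmult_le_pos; lra]).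
    nra.
Qed.

(* A quadratic with leading coefficient [a y - b <= 0] lies above its chord. *)
Lemma Pw_concave_nonneg y l r x :
  a * y <= b -> l <= x <= r ->
  0 <= Pw a b c l y -> 0 <= Pw a b c r y -> 0 <= Pw a b c x y.
Proof.
  intros hy [hl hr] h0l h0r.
  assert (hchord : (r - l) * Pw a b c x y
    = (r - x) * Pw a b c l y + (x - l) * Pw a b c r y
      + (b - a * y) * ((x - l) * (r - x)) * (r - l))
    by (unfold Pw; ring).
  destruct (Req_dec l r) as [<- | hlr]; [replace x with l by lra; exact h0l|].
  assert (0 <= (r - x) * Pw a b c l y) by (apply Rmult_le_pos; lra).
  assert (0 <= (x - l) * Pw a b c r y) by (apply Rmult_le_pos; lra).
  assert (0 <= (b - a * y) * ((x - l) * (r - x)) * (r - l))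
    by (repeat apply Rmult_le_pos; lra).
  nra.
Qed.

Lemma two_point_good_profile u v q :
  0 < a -> 0 <= th -> 0 < q <= 1 / 2 -> 0 <= u <= v ->
  (1 - q) * u + q * v = b / a ->
  (1 - q) * u ^ 2 + q * v ^ 2 = (c - th) / a ->
  (forall x, 0 <= x <= b / a -> 0 <= Pw a b c x u) ->
  (forall x, 0 <= x -> 0 <= Pw a b c x v) ->
  good_profile a b c th [(1 - q, u); (q, v)].
Proof.
  intros ha hth hq huv hmean hsq hu hv.
  set (s := [(1 - q, u); (q, v)]).
  assert (hs : valid_mixed s).
  { split; [|simpl; ring].
    repeat apply Forall_cons; try apply Forall_nil; simpl; lra. }
  assert (hmean_s : mean s = b / a) by (unfold mean, s; rewrite Ex_pair; lra).
  assert (hsq_s : Ex s (fun y => y ^ 2) = (c - th) / a) by (unfold s; rewrite Ex_pair; lra).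
  assert (hindiff : forall x,
    (1 - q) * (Pw a b c x u - th * x) + q * (Pw a b c x v - th * x) = 1 / 2 - th * (b / a)).
  { intros x; rewrite <- (Ex_Pw_indifferent s x) by (lra || apply hs || assumption).
    unfold s; rewrite Ex_pair; reflexivity. }
  assert (huk : u <= b / a) by nra.
  assert (huv_half : 0 <= Pw a b c u v <= 1 / 2).
  { split; [apply hv; lra|].
    specialize (hindiff u); rewrite Pw_diag in hindiff. nra. }
  apply good_profile_of_moments; try assumption.
  - intros x y hx hy.
    destruct (in_support_pair _ _ _ _ _ hx) as [-> | ->];
      destruct (in_support_pair _ _ _ _ _ hy) as [-> | ->];
      rewrite ?Pw_diag, ?(Pw_swap u v); lra.
  - intros x hx; unfold s; rewrite Ex_pair; unfold payX.
    specialize (hindiff x).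
    destruct (Rle_lt_dec 0 (Pw a b c x u)) as [hxu | hxu].
    + assert (Pbar a b c x u <= Pw a b c x u) by (apply Pbar_le_Pw; exact hxu).
      assert (Pbar a b c x v <= Pw a b c x v) by (apply Pbar_le_Pw, hv; exact hx).
      nra.
    (* An effort that surely loses against [u] exceeds [b/a] and earns at most [q - th x]. *)
    + assert (hxk : b / a < x).
      { destruct (Rlt_le_dec (b / a) x) as [| hxk]; [assumption|].
        specialize (hu x (conj hx hxk)); lra. }
      rewrite Pbar_eq0 by lra.
      assert (Pbar a b c x v <= 1) by apply Pbar_le_1.
      nra.
Qed.

End Contest.

Lemma symmetric_branch a b c th k s :
  0 < a -> 0 < th -> 0 < k -> 0 < s ->
  b = a * k -> c - th = a * (k ^ 2 + s ^ 2) ->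
  a <= 2 * b ^ 2 / (c - th) ->
  0 <= Pw a b c 0 (k - s) ->
  0 <= Pw a b c (Rmax 0 (k - th / (2 * a * s))) (k + s) ->
  good_profile a b c th [(1 / 2, k - s); (1 / 2, k + s)].
Proof.
  intros ha hth hk hs hbk hcs hlo h0 hbar.
  assert (c = th + a * (k ^ 2 + s ^ 2)) by lra; subst b c.
  assert (hsk : s <= k).
  { assert (hks : 0 < k ^ 2 + s ^ 2) by nra.
    assert (hden : 0 < a * (k ^ 2 + s ^ 2)) by (apply Rmult_lt_0_compat; lra).
    rewrite hcs in hlo.
    apply (Rmult_le_compat_r (a * (k ^ 2 + s ^ 2))) in hlo; [|lra].
    replace (2 * (a * k) ^ 2 / (a * (k ^ 2 + s ^ 2)) * (a * (k ^ 2 + s ^ 2)))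
      with (2 * (a * k) ^ 2) in hlo by (field; split; lra).
    assert (h2 : a ^ 2 * (s ^ 2 - k ^ 2) <= 0) by nra.
    assert (0 < a ^ 2) by (apply pow_lt; lra).
    assert (s ^ 2 <= k ^ 2) by nra.
    nra. }
  replace (1 / 2, k - s) with (1 - 1 / 2, k - s) by (f_equal; field).
  apply two_point_good_profile; try lra.
  - field; lra.
  - field; lra.
  - intros x hx.
    apply (Pw_concave_nonneg _ _ _ (k - s) 0 (a * k / a)); [nra | exact hx | exact h0 |].
    replace (a * k / a) with k by (field; lra).
    assert (0 < s * (th + a * s ^ 2)) by (apply Rmult_lt_0_compat; nra).
    unfold Pw; nra.
  - intros x hx.
    replace (k - th / (2 * a * s))
      with (Pw_vertex a (a * k) (th + a * (k ^ 2 + s ^ 2)) (k + s)) in hbar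
      by (unfold Pw_vertex; field; nra).
    eapply Rle_trans; [exact hbar|].
    apply Pw_min_nonneg; [nra | exact hx].
Qed.

(* [2u - (u + w)^2] has the roots [1 - w -+ r]; [u >= w] already puts [u]
   above the smaller one since [r >= r^2 = 1 - 2w]. *)
Lemma sqr_add_le_twice u w r :
  0 <= w -> 0 <= r -> r ^ 2 = 1 - 2 * w -> w <= u -> u <= 1 - w + r ->
  (u + w) ^ 2 <= 2 * u.
Proof.
  intros hw hr hr2 hwu hur.
  assert (r <= 1) by nra.
  assert (1 - w - r <= u) by nra.
  assert (0 <= (u - (1 - w - r)) * (1 - w + r - u)) by (apply Rmult_le_pos; lra).
  nra.
Qed.

Lemma endpoint_threshold a b c th z :
  0 < b -> 0 < z -> c - th = b * z ->
  0 <= b * (b - 2 * c * th + 2 * th ^ 2) ->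
  a <= (b + c ^ 2 - 3 * c * th + 2 * th ^ 2
        + sqrt (b * (b - 2 * c * th + 2 * th ^ 2))) * b ^ 2 / (c - th) ^ 3 ->
  0 <= 1 - 2 * z * th /\ (a * z - b) * z ^ 2 <= 1 - z * th + sqrt (1 - 2 * z * th).
Proof.
  intros hb hz hcz hD hM.
  assert (hbz : 0 < b * z) by (apply Rmult_lt_0_compat; lra).
  assert (c = th + b * z) by lra; subst c.
  replace (b * (b - 2 * (th + b * z) * th + 2 * th ^ 2))
    with (b ^ 2 * (1 - 2 * z * th)) in hD, hM by ring.
  assert (0 < b ^ 2) by (apply pow_lt; lra).
  assert (hw : 0 <= 1 - 2 * z * th) by nra.
  split; [exact hw|].
  rewrite sqrt_mult_alt, sqrt_pow2 in hM by (try apply pow2_ge_0; lra).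
  set (r := sqrt (1 - 2 * z * th)) in *.
  match type of hM with _ <= ?e =>
    replace e with ((1 + z * (b * z - th) + r) / z ^ 3) in hM by (field; split; lra) end.
  apply (Rmult_le_compat_r (z ^ 3)) in hM; [|apply pow_le; lra].
  replace ((1 + z * (b * z - th) + r) / z ^ 3 * z ^ 3)
    with (1 + z * (b * z - th) + r) in hM by (field; lra).
  replace ((a * z - b) * z ^ 2) with (a * z ^ 3 - b * z ^ 2) by ring.
  lra.
Qed.

(* The minimum of [x |-> Pw x z] over [x >= 0] sits at the vertex when it is
   nonnegative, with value [(2A - (A z + th)^2) / (4A)] for [A = a z - b], and
   at [x = 0] otherwise, with value [1/2 - z th]. *)
Lemma endpoint_high_nonneg a b th z x :
  0 < b -> 0 <= th -> 0 < z -> b < a * z ->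
  0 <= 1 - 2 * z * th ->
  (a * z - b) * z ^ 2 <= 1 - z * th + sqrt (1 - 2 * z * th) ->
  0 <= x -> 0 <= Pw a b (th + b * z) x z.
Proof.
  intros hb hth hz hA hw hr hx.
  eapply Rle_trans; [|apply Pw_min_nonneg; [exact hA | exact hx]].
  unfold Rmax; destruct Rle_dec as [hv | hv]; [|unfold Pw; nra].
  assert (hvz : th <= (a * z - b) * z).
  { replace (Pw_vertex a b (th + b * z) z) with (((a * z - b) * z - th) / (2 * (a * z - b)))
      in hv by (unfold Pw_vertex; field; lra).
    apply (Rmult_le_compat_r (2 * (a * z - b))) in hv; [|lra].
    replace (((a * z - b) * z - th) / (2 * (a * z - b)) * (2 * (a * z - b)))
      with ((a * z - b) * z - th) in hv by (field; lra).
    lra. }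
  assert (hsq : ((a * z - b) * z ^ 2 + z * th) ^ 2 <= 2 * ((a * z - b) * z ^ 2)).
  { apply (sqr_add_le_twice _ _ (sqrt (1 - 2 * z * th))); try nra.
    - apply sqrt_pos.
    - rewrite pow2_sqrt by lra; ring. }
  assert (hmin : ((a * z - b) * z + th) ^ 2 <= 2 * (a * z - b)).
  { assert (0 < z ^ 2) by (apply pow_lt; lra). nra. }
  assert (hval := Pw_at_vertex a b (th + b * z) z hA).
  replace (th + b * z - 2 * b * z + a * z ^ 2) with ((a * z - b) * z + th) in hval by ring.
  nra.
Qed.

Lemma endpoint_branch a b c th z :
  0 < a -> 0 < b -> 0 < th -> 0 < z -> c - th = b * z ->
  2 * b ^ 2 / (c - th) <= a ->
  0 <= b * (b - 2 * c * th + 2 * th ^ 2) ->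
  a <= (b + c ^ 2 - 3 * c * th + 2 * th ^ 2
        + sqrt (b * (b - 2 * c * th + 2 * th ^ 2))) * b ^ 2 / (c - th) ^ 3 ->
  good_profile a b c th [(1 - b ^ 2 / (a * (c - th)), 0); (b ^ 2 / (a * (c - th)), z)].
Proof.
  intros ha hb hth hz hcz hlo hD hM.
  destruct (endpoint_threshold a b c th z hb hz hcz hD hM) as [hw hr].
  assert (hbz : 0 < b * z) by (apply Rmult_lt_0_compat; lra).
  assert (c = th + b * z) by lra; subst c; clear hcz hD hM.
  replace (th + b * z - th) with (b * z) in * by ring.
  assert (hbaz : 2 * b <= a * z).
  { apply (Rmult_le_compat_r (b * z)) in hlo; [|lra].
    replace (2 * b ^ 2 / (b * z) * (b * z)) with (2 * b * b) in hlo by (field; lra).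
    nra. }
  assert (hk : 0 < b / a) by (apply Rdiv_lt_0_compat; lra).
  assert (hkz : b / a < z).
  { apply (Rmult_lt_reg_r a); [lra|].
    replace (b / a * a) with b by (field; lra). lra. }
  replace (b ^ 2 / (a * (b * z))) with (b / (a * z)) by (field; lra).
  apply two_point_good_profile; try lra.
  - split; [apply Rdiv_lt_0_compat; lra|].
    apply (Rmult_le_reg_r (a * z)); [lra|].
    replace (b / (a * z) * (a * z)) with b by (field; lra). lra.
  - field; lra.
  - field; lra.
  - intros x hx.
    apply (Pw_concave_nonneg _ _ _ 0 0 (b / a)); [lra | exact hx | rewrite Pw_diag; lra |].
    assert (0 < b / a * (th + b * (z - b / a))) by (apply Rmult_lt_0_compat; nra).
    unfold Pw; nra.
  - intros x hx; apply endpoint_high_nonneg; lra.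
Qed.

Theorem proposition8 (a b c th : R)
  (ha : 0 < a) (hb : 0 < b) (hc : 0 < c) (hth : 0 < th)
  (hzeta : (b ^ 2 - a * (c - th)) / a ^ 2 < 0) :
  let zeta := (b ^ 2 - a * (c - th)) / a ^ 2 in
  let kappa := b / a in
  let s := sqrt (- zeta) in
  let z := (c - th) / b in
  let p := b ^ 2 / (a * (c - th)) in
  let xbar := Rmax 0 (kappa - th / (2 * a * s)) in
  let aM := (b + c ^ 2 - 3 * c * th + 2 * th ^ 2
             + sqrt (b * (b - 2 * c * th + 2 * th ^ 2))) * b ^ 2 / (c - th) ^ 3 in
  (* Symmetric branch *)
  (a <= 2 * b ^ 2 / (c - th) ->
   0 <= Pw a b c 0 (kappa - s) ->
   0 <= Pw a b c xbar (kappa + s) ->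
   good_profile a b c th [(1/2, kappa - s); (1/2, kappa + s)]) /\
  (* Endpoint branch; a <= aM requires aM to be real *)
  (2 * b ^ 2 / (c - th) <= a ->
   0 <= b * (b - 2 * c * th + 2 * th ^ 2) ->
   a <= aM ->
   good_profile a b c th [(1 - p, 0); (p, z)]).
Proof.
  intros zeta kappa s z p xbar aM.
  assert (hzeta' : 0 < - zeta) by (unfold zeta; lra).
  assert (hct : 0 < c - th).
  { assert (0 < a ^ 2) by (apply pow_lt; lra).
    assert (b ^ 2 - a * (c - th) = zeta * a ^ 2) by (unfold zeta; field; lra).
    nra. }
  split.
  - intros hlo h0 hbar.
    apply (symmetric_branch a b c th kappa s); try assumption.
    + apply Rdiv_lt_0_compat; assumption.
    + apply sqrt_lt_R0; assumption.
    + unfold kappa; field; lra.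
    + unfold s; rewrite pow2_sqrt by lra.
      unfold zeta, kappa; field; lra.
  - intros hlo hD hM.
    apply (endpoint_branch a b c th z); try assumption.
    + apply Rdiv_lt_0_compat; assumption.
    + unfold z; field; lra.
Qed.
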